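(* Let $W$ and $V$ be B-DMCs which are symmetric, symmetrized under the same permutation, and suppose that for a given $N=2^n$ ($n\ge0$) and $i\in\{1,\dots,N\}$: (A) $\mathbb P_V[L_{V_N^{(i)}}(y_1^N)<1]\ge\mathbb P_V[L_{V_N^{(i)}}(y_1^N)>1]$, (B) $Pe_N^{(i)}(W,V)-Pe_N^{(i)}(V)\le0$. Then (A) and (B) hold with $(N,i)$ replaced by $(2N,2i-1)$, and (A) holds with $(N,i)$ replaced by $(2N,2i)$. However, (B) need not hold for $(2N,2i)$: e.g. for $\mathcal Y=\{0,e,1\}$, $W$ the binary symmetric channel with crossover probability $0.3$ (with $W(e|x)=0$) and $V$ given by $V(0|0)=0.4, V(e|0)=0.5, V(1|0)=0.1$, $V(y|1)=V(\pi(y)|0)$ with $\pi$ swapping $0,1$ and fixing $e$ (so $L_V$ takes values $1/4,1,4$), conditions (A) and (B) hold for $N=1,i=1$ but (B) fails for $N=2,i=2$.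
   Context: A B-DMC $W:\{0,1\}\to\mathcal Y$ is given by transition probabilities $W(y|x)$, $\mathcal Y$ finite; $L_W(y)=W(y|1)/W(y|0)$. $W,V$ are ''symmetric, symmetrized under the same permutation'' if there is an involutive permutation $\pi$ of $\mathcal Y$ with $W(y|1)=W(\pi(y)|0)$, $V(y|1)=V(\pi(y)|0)$ for all $y$. For a B-DMC $W$: $W^-(y_1y_2|u_1)=\sum_{u_2}\tfrac12W(y_1|u_1\oplus u_2)W(y_2|u_2)$, $W^+(y_1y_2u_1|u_2)=\tfrac12W(y_1|u_1\oplus u_2)W(y_2|u_2)$. Synthetic channels: $W_1^{(1)}=W$, $W_{2N}^{(2i-1)}=(W_N^{(i)})^-$, $W_{2N}^{(2i)}=(W_N^{(i)})^+$; an output of $W_N^{(i)}$ is written $(y_1^N,u_1^{i-1})$ as in Arıkan's construction and $L_{V_N^{(i)}}(y_1^N):=L_{V_N^{(i)}}(y_1^N,0_1^{i-1})$. With $L_1=L_{V_N^{(i)}}(y_1^N)$, $L_2=L_{V_N^{(i)}}(y_{N+1}^{2N})$: $L_{V_{2N}^{(2i-1)}}=\frac{L_1+L_2}{1+L_1L_2}$, $L_{V_{2N}^{(2i)}}=L_1L_2$. Notation: $W(y_1^N|0_1^N)=\prod_jW(y_j|0)$, $\mathbb P_W[E]=\sum_{y_1^N}W(y_1^N|0_1^N)\mathbf 1\{E\}$, $\mathbf H(\ell)=\mathbf 1\{\ell>1\}+\tfrac12\mathbf 1\{\ell=1\}$. Mismatched error probability: $Pe_N^{(i)}(W,V)=\sum_{u}\tfrac12\sum_{(y_1^N,u_1^{i-1})}W_N^{(i)}(y_1^N,u_1^{i-1}|u)\big[\mathbf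 1\{V_N^{(i)}(\cdot|u\oplus1)>V_N^{(i)}(\cdot|u)\}+\tfrac12\mathbf 1\{V_N^{(i)}(\cdot|u\oplus1)=V_N^{(i)}(\cdot|u)\}\big]$, evaluated at the output $(y_1^N,u_1^{i-1})$; $Pe_N^{(i)}(V)=Pe_N^{(i)}(V,V)$. For such symmetric $W,V$ it is known that $Pe_N^{(i)}(W,V)=\sum_{y_1^N}W(y_1^N|0_1^N)\mathbf H(L_{V_N^{(i)}}(y_1^N))$. *)

From HB Require Import structures.
From mathcomp Require Import all_boot all_order all_algebra.
Set Implicit Arguments. Unset Strict Implicit. Unset Printing Implicit Defensive.
Import Order.TTheory GRing.Theory Num.Theory.
Local Open Scope ring_scope.

(* A B-DMC W : {0,1} -> Y with finite output alphabet Y; W y x = W(y|x),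
   the input bit 0 is [false], 1 is [true]. *)
Definition bdmc (R : realFieldType) (Y : finType) (W : Y -> bool -> R) : Prop :=
  (forall y x, 0 <= W y x) /\ (forall x, \sum_(y : Y) W y x = 1).

Definition sym_same (R : realFieldType) (Y : finType) (W V : Y -> bool -> R) : Prop :=
  exists pi : Y -> Y, (forall y, pi (pi y) = y) /\
    (forall y, W y true = W (pi y) false) /\ (forall y, V y true = V (pi y) false).

(* The index (N, i) with N = 2^n, 1 <= i <= N is encoded by the list of the
   n bits of i-1, least significant bit first.  Since
   W_{2N}^{(2i-1)} = (W_N^{(i)})^- and W_{2N}^{(2i)} = (W_N^{(i)})^+, the head
   bit says whether the last transform applied is "-" (false) or "+" (true). *)
Fixpoint bitsOf (n k : nat) : seq bool :=
  match n with
  | 0 => [::]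
  | n'.+1 => odd k :: bitsOf n' k./2
  end.
Definition idx (n i : nat) : seq bool := bitsOf n (i - 1).

(* Output alphabet of the synthetic channel: W^- has outputs (y1,y2),
   W^+ has outputs (y1,y2,u1). *)
Fixpoint outT (Y : finType) (s : seq bool) : finType :=
  match s with
  | [::] => Y
  | b :: s' => if b then Finite.clone ((outT Y s' * outT Y s') * bool)%type _
               else Finite.clone (outT Y s' * outT Y s')%type _
  end.

Fixpoint synth (R : realFieldType) (Y : finType) (W : Y -> bool -> R) (s : seq bool)
  : outT Y s -> bool -> R :=
  match s return outT Y s -> bool -> R with
  | [::] => W
  | b :: s' =>
    let Ws := @synth R Y W s' in
    if b as b' return outT Y (b' :: s') -> bool -> R then
      (fun o u2 => 2^-1 * Ws o.1.1 (o.2 (+) u2) * Ws o.1.2 u2)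
    else
      (fun o u1 => \sum_(u2 : bool) 2^-1 * Ws o.1 (u1 (+) u2) * Ws o.2 u2)
  end.

(* The output (y_1^N, 0_1^{i-1}) of W_N^{(i)}, with y_1^N given by
   j |-> y_{j+1} (j = 0..N-1).  Under the recursion the output of W_{2N}^{(.)}
   is built from (y_1^N, 0) and (y_{N+1}^{2N}, 0) (and u_1 = 0 for "+"),
   which is the all-zero u-history. *)
Fixpoint zeroOut (Y : finType) (s : seq bool) (y : nat -> Y) : outT Y s :=
  match s return outT Y s with
  | [::] => y 0%N
  | b :: s' =>
    let N := (2 ^ size s')%N in
    if b as b' return outT Y (b' :: s') then
      (@zeroOut Y s' y, @zeroOut Y s' (fun j => y (N + j)%N), false)
    else
      (@zeroOut Y s' y, @zeroOut Y s' (fun j => y (N + j)%N))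
  end.

Lemma pow2_gt0 (m : nat) : (0 < 2 ^ m)%N.
Proof. by rewrite expn_gt0. Qed.

Definition ffseq (Y : finType) (m : nat) (y : {ffun 'I_(2 ^ m) -> Y}) : nat -> Y :=
  fun j => y (insubd (Ordinal (pow2_gt0 m)) j).

(* L_{V_N^{(i)}}(y) < 1 and > 1, with L = V(.|1)/V(.|0) compared without
   division (L = +infinity when V(.|0) = 0 < V(.|1); 0/0 counts as 1). *)
Definition LV_lt1 (R : realFieldType) (Y : finType) (V : Y -> bool -> R) (s : seq bool)
  (o : outT Y s) : bool := @synth R Y V s o true < @synth R Y V s o false.
Definition LV_gt1 (R : realFieldType) (Y : finType) (V : Y -> bool -> R) (s : seq bool)
  (o : outT Y s) : bool := @synth R Y V s o false < @synth R Y V s o true.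

Definition ProbV (R : realFieldType) (Y : finType) (V : Y -> bool -> R) (s : seq bool)
  (E : outT Y s -> bool) : R :=
  \sum_(y : {ffun 'I_(2 ^ size s) -> Y})
     (\prod_(j < 2 ^ size s) V (y j) false) * (E (@zeroOut Y s (@ffseq Y (size s) y)))%:R.

Definition Hind (R : realFieldType) (a b : R) : R :=
  if b < a then 1 else if a == b then 2^-1 else 0.

Definition Pe (R : realFieldType) (Y : finType) (W V : Y -> bool -> R) (s : seq bool) : R :=
  \sum_(u : bool) 2^-1 * \sum_(o : outT Y s)
     @synth R Y W s o u * Hind (@synth R Y V s o (~~ u)) (@synth R Y V s o u).

Definition condA (R : realFieldType) (Y : finType) (V : Y -> bool -> R) (n i : nat) : Prop :=
  @ProbV R Y V (idx n i) (@LV_gt1 R Y V (idx n i)) <= @ProbV R Y V (idx n i) (@LV_lt1 R Y V (idx n i)).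
Definition condB (R : realFieldType) (Y : finType) (W V : Y -> bool -> R) (n i : nat) : Prop :=
  @Pe R Y W V (idx n i) - @Pe R Y V V (idx n i) <= 0.

(* The example: Y = {0, e, 1} encoded as 'I_3 with 0 |-> 0, e |-> 1, 1 |-> 2;
   pi = rev_ord swaps 0 and 1 and fixes e. *)
Definition exW0 (R : realFieldType) (y : 'I_3) : R :=
  match val y with 0 => 7%:R / 10%:R | 1 => 0 | _ => 3%:R / 10%:R end.
Definition exV0 (R : realFieldType) (y : 'I_3) : R :=
  match val y with 0 => 4%:R / 10%:R | 1 => 5%:R / 10%:R | _ => 1%:R / 10%:R end.
Definition exW (R : realFieldType) (y : 'I_3) (x : bool) : R :=
  if x then exW0 R (rev_ord y) else exW0 R y.
Definition exV (R : realFieldType) (y : 'I_3) (x : bool) : R :=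
  if x then exV0 R (rev_ord y) else exV0 R y.

From HB Require Import structures.
From mathcomp Require Import all_boot all_order all_algebra.
From mathcomp Require Import ring lra zify.
Import Order.TTheory GRing.Theory Num.Theory.
Local Open Scope ring_scope.
Set Implicit Arguments. Unset Strict Implicit. Unset Printing Implicit Defensive.

(* By the symmetry of W and V the mismatched
   error probability of W_N^(i) is a = sum_o W(o|0) errV(o), where errV(o) is
   the error indicator of the ML decision for V at o.  On the "-" channel the
   decision errs iff exactly one of the two component decisions errs, so the
   error probability becomes 2a(1-a); as a_W <= a_V <= 1/2 and x |-> 2x(1-x)
   is nondecreasing on [0, 1/2], condition (B) is inherited.

   Condition (A) holds at every index.  Let D = (V(o|0) - V(o|1)) /
   (V(o|0) + V(o|1)) be the soft bit of an output o of V_N^(i).  Its law under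
   the all-zero input is symmetric: E[(1 - D)(k(D) - k(-D))] = 0 for all k.
   This holds for V by the permutation pi, and is preserved by the "-"
   transform (D = D1 D2) and the "+" transform (D = (D1+D2)/(1+D1 D2)) of two
   independent outputs.  Taking k = 1{. > 0} gives
   P[L < 1] - P[L > 1] = P[D > 0] - P[D < 0] = E[|D|] >= 0. *)

Section SyntheticChannels.
Variables (R : realFieldType) (Y : finType).

Lemma big_out_minus s (F : outT Y (false :: s) -> R) :
  \sum_(o : outT Y (false :: s)) F o = \sum_(o1 : outT Y s) \sum_(o2 : outT Y s) F (o1, o2).
Proof. by rewrite (pair_bigA _ (fun o1 o2 => F (o1, o2))); apply: eq_bigr => -[]. Qed.

Lemma big_out_plus s (F : outT Y (true :: s) -> R) :
  \sum_(o : outT Y (true :: s)) F o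
  = \sum_(o1 : outT Y s) \sum_(o2 : outT Y s) \sum_(u : bool) F (o1, o2, u).
Proof.
rewrite (pair_bigA _ (fun o1 o2 => \sum_(u : bool) F (o1, o2, u))) /=.
rewrite (pair_bigA _ (fun p (u : bool) => F (p.1, p.2, u))) /=.
by apply: eq_bigr => -[[]].
Qed.

(* For W^+ both halves are flipped (flipping u_2 flips u_1 (+) u_2 as well);
   for W^- only the first half is (the sum over u_2 absorbs the rest). *)
Fixpoint out_flip (pi : Y -> Y) (s : seq bool) : outT Y s -> outT Y s :=
  match s return outT Y s -> outT Y s with
  | [::] => pi
  | b :: s' =>
    if b as b' return outT Y (b' :: s') -> outT Y (b' :: s') then
      fun o => (@out_flip pi s' o.1.1, @out_flip pi s' o.1.2, o.2)
    else fun o => (@out_flip pi s' o.1, o.2)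
  end.
Arguments out_flip pi s _ : clear implicits.

Lemma out_flipK (pi : Y -> Y) s : involutive pi -> involutive (out_flip pi s).
Proof.
move=> piK; elim: s => [|[] s IH] o /=; first exact: piK.
  by case: o => [[o1 o2] u] /=; rewrite !IH.
by case: o => o1 o2 /=; rewrite IH.
Qed.

Lemma big_sep (I J : finType) (F : I -> R) (G : J -> R) :
  \sum_(i : I) \sum_(j : J) F i * G j = (\sum_(i : I) F i) * (\sum_(j : J) G j).
Proof. by rewrite big_distrlr. Qed.

Variable W : Y -> bool -> R.

Lemma synth_ge0 s (o : outT Y s) u : (forall y x, 0 <= W y x) -> 0 <= synth W o u.
Proof.
move=> W_ge0; elim: s o u => [|[] s IH] o u //=.
  by rewrite !mulr_ge0 // invr_ge0 ler0n.
by apply: sumr_ge0 => u2 _; rewrite !mulr_ge0 // invr_ge0 ler0n.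
Qed.

Lemma synth_bdmc s : bdmc W -> bdmc (@synth R Y W s).
Proof.
move=> [W_ge0 W_sum1]; split=> [o u|]; first exact: synth_ge0.
elim: s => [|[] s IH] u /=; first exact: W_sum1.
- rewrite big_out_plus.
  under eq_bigr do rewrite exchange_big; rewrite exchange_big big_bool /=.
  by rewrite !big_sep -!mulr_sumr !IH; field.
- rewrite big_out_minus.
  under eq_bigr do rewrite exchange_big; rewrite exchange_big big_bool /=.
  by rewrite !big_sep -!mulr_sumr !IH; field.
Qed.

Lemma synth_flip (pi : Y -> Y) :
  involutive pi -> (forall y, W y true = W (pi y) false) ->
  forall s o u, synth W (out_flip pi s o) u = synth W o (~~ u).
Proof.
move=> piK Wsym s; elim: s => [|[] s IH] o u /=.
- by case: u => /=; rewrite Wsym ?piK.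
- by case: o => [[o1 o2] u1] /=; rewrite !IH; case: u1; case: u.
- by case: o => o1 o2 /=; rewrite !big_bool /= !IH; case: u.
Qed.

End SyntheticChannels.

Lemma Hind_sg (R : realFieldType) (a b : R) : Hind a b = (1 + Num.sg (a - b)) / 2.
Proof.
rewrite /Hind; case: ltrgtP => [ab|ba|->].
- by rewrite gtr0_sg ?subr_gt0 //; field.
- by rewrite ltr0_sg ?subr_lt0 // subrr mul0r.
- by rewrite subrr sgr0 addr0 div1r.
Qed.

Lemma Hind_compl (R : realFieldType) (a b : R) : Hind a b = 1 - Hind b a.
Proof. by rewrite !Hind_sg -opprB sgrN; field. Qed.

Lemma Hind_gt (R : realFieldType) (a b : R) : b < a -> Hind a b = 1.
Proof. by rewrite /Hind => ->. Qed.

Lemma Hind_lt (R : realFieldType) (a b : R) : a < b -> Hind a b = 0.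
Proof. by move=> ab; rewrite /Hind ltNge (ltW ab) /= lt_eqF. Qed.

Lemma Hind_eq (R : realFieldType) (a b : R) : a = b -> Hind a b = 2^-1.
Proof. by move=> ->; rewrite /Hind ltxx eqxx. Qed.

Lemma Hind_ge0 (R : realFieldType) (a b : R) : 0 <= Hind a b.
Proof. by rewrite /Hind; case: ifP => _; [|case: ifP => _]; rewrite ?invr_ge0 ?ler0n. Qed.

Section ErrorProbability.
Variables (R : realFieldType) (Y : finType) (W V : Y -> bool -> R) (pi : Y -> Y).
Hypotheses (piK : involutive pi) (Wsym : forall y, W y true = W (pi y) false)
  (Vsym : forall y, V y true = V (pi y) false).

(* errV o = 1{L_V(o) > 1} + 1/2 1{L_V(o) = 1}: the probability that the
   maximum-likelihood decision for V errs at output o when 0 was sent. *)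
Definition errV s (o : outT Y s) : R := Hind (synth V o true) (synth V o false).

Definition err s : R := \sum_(o : outT Y s) synth W o false * errV o.

(* By symmetry, sending 1 gives the same error probability as sending 0. *)
Lemma Pe_err s : Pe W V s = err s.
Proof.
rewrite /Pe big_bool /= /err.
rewrite [X in 2^-1 * X](reindex_inj (can_inj (out_flipK piK))) /=.
under eq_bigr do rewrite (synth_flip piK Wsym) !(synth_flip piK Vsym) /=.
by rewrite /errV; lra.
Qed.

Lemma err_true s : bdmc W ->
  \sum_(o : outT Y s) synth W o true * errV o = 1 - err s.
Proof.
move=> hW; rewrite (reindex_inj (can_inj (out_flipK piK))) /=.
rewrite -((synth_bdmc s hW).2 false) /err -sumrB; apply: eq_bigr => o _.
rewrite /errV !(synth_flip piK Wsym) !(synth_flip piK Vsym) /=.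
by rewrite Hind_compl mulrBr mulr1.
Qed.

(* On the "-" channel the error indicator combines as an exclusive or:
   the decision errs iff exactly one of the two component decisions errs. *)
Lemma errV_minus s (o1 o2 : outT Y s) :
  errV (s := false :: s) (o1, o2) = errV o1 + errV o2 - 2 * errV o1 * errV o2.
Proof.
rewrite /errV !Hind_sg /= !big_bool /=.
set x1 := synth V o1 false; set y1 := synth V o1 true.
set x2 := synth V o2 false; set y2 := synth V o2 true.
have -> : 2^-1 * x1 * y2 + 2^-1 * y1 * x2 - (2^-1 * y1 * y2 + 2^-1 * x1 * x2)
          = - (2^-1 * ((y1 - x1) * (y2 - x2))) by ring.
by rewrite sgrN !sgrM gtr0_sg ?invr_gt0 ?ltr0n // mul1r; field.
Qed.

Lemma err_minus s : bdmc W -> err (false :: s) = 2 * err s * (1 - err s).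
Proof.
move=> hW.
have xor_sum u : \sum_(o1 : outT Y s) \sum_(o2 : outT Y s)
      synth W o1 u * synth W o2 u * (errV o1 + errV o2 - 2 * errV o1 * errV o2)
    = 2 * (\sum_(o : outT Y s) synth W o u * errV o)
      - 2 * (\sum_(o : outT Y s) synth W o u * errV o) ^+ 2.
  transitivity (\sum_(o1 : outT Y s) \sum_(o2 : outT Y s)
      (synth W o1 u * errV o1 * synth W o2 u + synth W o1 u * (synth W o2 u * errV o2)
       - 2 * (synth W o1 u * errV o1) * (synth W o2 u * errV o2))).
    by apply: eq_bigr => o1 _; apply: eq_bigr => o2 _; ring.
  under eq_bigr do rewrite sumrB big_split /=.
  rewrite sumrB big_split /= !big_sep -mulr_sumr ((synth_bdmc s hW).2 u); ring.
rewrite {1}/err big_out_minus.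
transitivity (\sum_(o1 : outT Y s) \sum_(o2 : outT Y s)
   (2^-1 * (synth W o1 false * synth W o2 false * (errV o1 + errV o2 - 2 * errV o1 * errV o2))
    + 2^-1 * (synth W o1 true * synth W o2 true * (errV o1 + errV o2 - 2 * errV o1 * errV o2)))).
  apply: eq_bigr => o1 _; apply: eq_bigr => o2 _.
  by rewrite errV_minus /= !big_bool /=; ring.
under eq_bigr do rewrite big_split /= -!mulr_sumr.
by rewrite big_split /= -!mulr_sumr !xor_sum (err_true s hW) -/(err s); field.
Qed.

End ErrorProbability.

Lemma err_matched_le_half (R : realFieldType) (Y : finType) (V : Y -> bool -> R)
  (pi : Y -> Y) (piK : involutive pi) (Vsym : forall y, V y true = V (pi y) false)
  s : bdmc V -> err V V s <= 2^-1.
Proof.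
move=> hV; have compl := err_true piK Vsym Vsym s hV.
suff : err V V s <= \sum_(o : outT Y s) synth V o true * errV V o by lra.
apply: ler_sum => o _; rewrite /errV /Hind.
by case: ltrgtP => [lt_xy|_|->]; rewrite ?mulr0 ?mulr1 //; exact: ltW.
Qed.

(* Condition (B) is inherited by the "-" transform: x |-> 2x(1-x) is
   nondecreasing on [0, 1/2], and a_W <= a_V <= 1/2. *)
Lemma condB_minus (R : realFieldType) (Y : finType) (W V : Y -> bool -> R) (pi : Y -> Y)
  (piK : involutive pi) (Wsym : forall y, W y true = W (pi y) false)
  (Vsym : forall y, V y true = V (pi y) false) s :
  bdmc W -> bdmc V -> Pe W V s - Pe V V s <= 0 ->
  Pe W V (false :: s) - Pe V V (false :: s) <= 0.
Proof.
move=> hW hV; rewrite !(Pe_err piK Wsym Vsym) !(Pe_err piK Vsym Vsym).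
rewrite (err_minus piK Wsym Vsym s hW) (err_minus piK Vsym Vsym s hV).
have aV_le := err_matched_le_half piK Vsym s hV.
have aW_ge0 : 0 <= err W V s.
  by apply: sumr_ge0 => o _; rewrite mulr_ge0 ?Hind_ge0 ?(synth_bdmc s hW).1.
move: aV_le aW_ge0; set aW := err W V s; set aV := err V V s; nra.
Qed.

Section Halves.
Variable Y : finType.

Definition catf (m : nat) (y1 y2 : nat -> Y) : nat -> Y :=
  fun k => if (k < 2 ^ m)%N then y1 k else y2 (k - 2 ^ m)%N.

Lemma ffseq_lt m (y : {ffun 'I_(2 ^ m) -> Y}) k (hk : (k < 2 ^ m)%N) :
  ffseq y k = y (Ordinal hk).
Proof. by rewrite /ffseq; congr (y _); apply: val_inj; rewrite val_insubd /= hk. Qed.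

Lemma ffseq_ord m (y : {ffun 'I_(2 ^ m) -> Y}) (j : 'I_(2 ^ m)) : ffseq y j = y j.
Proof. by rewrite (ffseq_lt y (ltn_ord j)); congr (y _); apply: val_inj. Qed.

Lemma expn2S m : (2 ^ m.+1 = 2 ^ m + 2 ^ m)%N.
Proof. by rewrite expnS mul2n addnn. Qed.

Definition joinf m (p : {ffun 'I_(2 ^ m) -> Y} * {ffun 'I_(2 ^ m) -> Y}) :
  {ffun 'I_(2 ^ m.+1) -> Y} :=
  [ffun j : 'I_(2 ^ m.+1) => catf m (ffseq p.1) (ffseq p.2) j].

Definition splitf m (y : {ffun 'I_(2 ^ m.+1) -> Y}) :
  {ffun 'I_(2 ^ m) -> Y} * {ffun 'I_(2 ^ m) -> Y} :=
  ([ffun j : 'I_(2 ^ m) => ffseq y j], [ffun j : 'I_(2 ^ m) => ffseq y (2 ^ m + j)]).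

Lemma ffseq_join m p k : (k < 2 ^ m.+1)%N ->
  ffseq (@joinf m p) k = catf m (ffseq p.1) (ffseq p.2) k.
Proof. by move=> hk; rewrite (ffseq_lt _ hk) ffunE. Qed.

Lemma joinfK m : cancel (@joinf m) (@splitf m).
Proof.
case=> y1 y2; rewrite /splitf; congr pair; apply/ffunP => j; rewrite ffunE /=.
- have hj : (j < 2 ^ m.+1)%N by rewrite expn2S ltn_addr.
  by rewrite ffseq_join //= /catf ltn_ord ffseq_ord.
- have hj : (2 ^ m + j < 2 ^ m.+1)%N by rewrite expn2S ltn_add2l.
  rewrite ffseq_join //= /catf ifN; last by rewrite -leqNgt leq_addr.
  by rewrite addKn ffseq_ord.
Qed.

Lemma splitfK m : cancel (@splitf m) (@joinf m).
Proof.
move=> y; apply/ffunP => j; rewrite ffunE /catf /=.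
case: ifP => hj; first by rewrite (ffseq_lt _ hj) ffunE ffseq_ord.
have hj' : (j - 2 ^ m < 2 ^ m)%N by have := ltn_ord j; have := expn2S m; lia.
rewrite (ffseq_lt _ hj') ffunE /= subnKC ?ffseq_ord //.
by rewrite leqNgt hj.
Qed.

Lemma zeroOut_ext s (y y' : nat -> Y) :
  (forall k, (k < 2 ^ size s)%N -> y k = y' k) -> zeroOut s y = zeroOut s y'.
Proof.
elim: s y y' => [|b s IH] y y' h /=; first by apply: h; rewrite expn0.
have first_half : zeroOut s y = zeroOut s y'.
  by apply: IH => k hk; apply: h; rewrite /= expn2S ltn_addr.
have second_half : zeroOut s (fun j => y (2 ^ size s + j)%N)
                 = zeroOut s (fun j => y' (2 ^ size s + j)%N).
  by apply: IH => k hk; apply: h; rewrite /= expn2S ltn_add2l.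
by clear h; case: b; rewrite first_half second_half.
Qed.

Definition build (b : bool) (s : seq bool) (o1 o2 : outT Y s) : outT Y (b :: s) :=
  if b as b' return outT Y (b' :: s) then (o1, o2, false) else (o1, o2).

Lemma zeroOut_cat b s (y1 y2 : nat -> Y) :
  zeroOut (b :: s) (catf (size s) y1 y2) = build b (zeroOut s y1) (zeroOut s y2).
Proof.
have first_half : zeroOut s (catf (size s) y1 y2) = zeroOut s y1.
  by apply: zeroOut_ext => k hk; rewrite /catf hk.
have second_half : zeroOut s (fun j => catf (size s) y1 y2 (2 ^ size s + j)%N)
                 = zeroOut s y2.
  apply: zeroOut_ext => k hk; rewrite /catf ifN; last by rewrite -leqNgt leq_addr.
  by rewrite addKn.
by case: b; rewrite /= first_half second_half.
Qed.

End Halves.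

Section ZeroInputExpectation.
Variables (R : realFieldType) (Y : finType) (V : Y -> bool -> R).

Definition Eseq (m : nat) (G : (nat -> Y) -> R) : R :=
  \sum_(y : {ffun 'I_(2 ^ m) -> Y}) (\prod_(j < 2 ^ m) V (y j) false) * G (ffseq y).

Definition Eout (s : seq bool) (F : outT Y s -> R) : R :=
  Eseq (size s) (fun y => F (zeroOut s y)).
Arguments Eout s F : clear implicits.

Lemma ProbV_Eout s (E : outT Y s -> bool) : ProbV V E = Eout s (fun o => (E o)%:R).
Proof. by []. Qed.

Lemma prod_joinf m p :
  \prod_(j < 2 ^ m.+1) V (@joinf Y m p j) false
  = (\prod_(j < 2 ^ m) V (p.1 j) false) * (\prod_(j < 2 ^ m) V (p.2 j) false).
Proof.
under eq_bigr do rewrite ffunE.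
rewrite -(big_mkord xpredT (fun k => V (catf m (ffseq p.1) (ffseq p.2) k) false)).
rewrite expn2S (big_cat_nat (n := (2 ^ m)%N)) ?leq_addr //=.
congr (_ * _); rewrite ?big_mkord.
  by apply: eq_bigr => j _; rewrite /catf ltn_ord ffseq_ord.
rewrite -{1}[(2 ^ m)%N]add0n big_addn addnK big_mkord; apply: eq_bigr => j _.
by rewrite /catf ifN ?addnK ?ffseq_ord // -leqNgt leq_addl.
Qed.

Lemma Eseq_split m G :
  (forall y y', (forall k, (k < 2 ^ m.+1)%N -> y k = y' k) -> G y = G y') ->
  Eseq m.+1 G = Eseq m (fun y1 => Eseq m (fun y2 => G (catf m y1 y2))).
Proof.
move=> G_ext; rewrite /Eseq (reindex (@joinf Y m)); last first.
  by apply: onW_bij; exists (@splitf Y m); [exact: joinfK | exact: splitfK].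
under [RHS]eq_bigr do rewrite mulr_sumr.
rewrite pair_big /=; apply: eq_bigr => -[y1 y2] _ /=.
rewrite prod_joinf -mulrA; congr (_ * (_ * _)).
by apply: G_ext => k hk; rewrite ffseq_join.
Qed.

Lemma Eout_cons b s F :
  Eout (b :: s) F = Eout s (fun o1 => Eout s (fun o2 => F (build b o1 o2))).
Proof.
rewrite /Eout (Eseq_split (m := size s)); last by move=> y y' h; congr F; apply: zeroOut_ext.
apply: eq_bigr => y1 _; congr (_ * _); apply: eq_bigr => y2 _.
by rewrite zeroOut_cat.
Qed.

Lemma Eout_nil (F : outT Y [::] -> R) : Eout [::] F = \sum_(x : Y) V x false * F x.
Proof.
rewrite /Eout /Eseq /= (reindex (fun x : Y => [ffun _ : 'I_(2 ^ 0) => x])); last first.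
  apply: onW_bij; exists (fun y : {ffun 'I_(2 ^ 0) -> Y} => y (Ordinal (pow2_gt0 0))).
    by move=> x; rewrite ffunE.
  move=> y; apply/ffunP => j; rewrite ffunE; congr (y _); apply: val_inj => /=.
  by case: j => [[|k] hk] //=; rewrite expn0 in hk.
apply: eq_bigr => x _.
by rewrite /ffseq ffunE big_ord_recl big_ord0 ffunE mulr1.
Qed.

Lemma Eout_ext s (F G : outT Y s -> R) : (forall o, F o = G o) -> Eout s F = Eout s G.
Proof. by move=> FG; apply: eq_bigr => y _; rewrite FG. Qed.

Lemma Eout_add s (F G : outT Y s -> R) :
  Eout s (fun o => F o + G o) = Eout s F + Eout s G.
Proof. by rewrite /Eout /Eseq -big_split; apply: eq_bigr => y _; rewrite mulrDr. Qed.

Lemma Eout_sub s (F G : outT Y s -> R) :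
  Eout s (fun o => F o - G o) = Eout s F - Eout s G.
Proof. by rewrite /Eout /Eseq -sumrB; apply: eq_bigr => y _; rewrite mulrBr. Qed.

Lemma Eout0 s : Eout s (fun _ => 0) = 0.
Proof. by rewrite /Eout /Eseq big1 // => y _; rewrite mulr0. Qed.

Lemma Eout_swap s (G : outT Y s -> outT Y s -> R) :
  Eout s (fun o1 => Eout s (fun o2 => G o1 o2))
  = Eout s (fun o2 => Eout s (fun o1 => G o1 o2)).
Proof.
rewrite /Eout /Eseq; under eq_bigr do rewrite mulr_sumr.
under [RHS]eq_bigr do rewrite mulr_sumr.
by rewrite exchange_big; apply: eq_bigr => y1 _; apply: eq_bigr => y2 _; rewrite mulrCA.
Qed.

Hypothesis V_ge0 : forall y x, 0 <= V y x.

Lemma Eout_ge0 s (F : outT Y s -> R) : (forall o, 0 <= F o) -> 0 <= Eout s F.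
Proof. by move=> F_ge0; apply: sumr_ge0 => y _; rewrite mulr_ge0 // prodr_ge0. Qed.

Definition supp s (o : outT Y s) : bool := 0 < synth V o false.

Lemma supp_build b s (o1 o2 : outT Y s) :
  supp o1 -> supp o2 -> supp (build b o1 o2).
Proof.
rewrite /supp => p1 p2; have p12 := mulr_gt0 p1 p2.
have q12 := mulr_ge0 (synth_ge0 o1 true V_ge0) (synth_ge0 o2 true V_ge0).
by case: b => /=; rewrite ?big_bool /=; nra.
Qed.

(* Eout only sees the support: the zero-input output sequences of positive
   probability always produce outputs of positive probability. *)
Lemma Eout_supp s (F G : outT Y s -> R) :
  (forall o, supp o -> F o = G o) -> Eout s F = Eout s G.
Proof.
elim: s F G => [|b s IH] F G FG.
  rewrite !Eout_nil; apply: eq_bigr => x _.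
  have := V_ge0 x false; rewrite le0r => /orP [/eqP -> | pos]; first by rewrite !mul0r.
  by rewrite FG.
rewrite !Eout_cons; apply: (IH) => o1 p1; apply: (IH) => o2 p2.
by apply: FG; apply: supp_build.
Qed.

End ZeroInputExpectation.
Arguments Eout {R Y} V s F.

(* Pointwise identities behind the symmetry of the soft bit under the "-"
   (D = ab) and "+" (D = (a + b)/(1 + ab)) transforms: the odd part of
   k, weighted by 1 - D, splits into an odd part in a plus an odd part in b. *)
Lemma odd_parts_minus (R : realFieldType) (k : R -> R) (a b : R) :
  (1 - a * b) * (k (a * b) - k (- (a * b)))
  = (1 - a) * (k (a * b) - k (- a * b)) + (1 - b) * (a * k (a * b) - a * k (a * - b)).
Proof. by rewrite mulNr mulrN; ring. Qed.

Lemma odd_parts_plus (R : realFieldType) (k : R -> R) (a b : R) :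
  let K u v := k ((u + v) / (1 + u * v)) / (1 + u * v) in
  let c := (a + b) / (1 + a * b) in
  1 + a * b != 0 ->
  (1 - c) * (k c - k (- c))
  = (1 - a) * ((1 - b) * K a b - (1 - b) * K (- a) b)
    + (1 - b) * ((1 - a) * K (- a) b - (1 - a) * K (- a) (- b)).
Proof.
move=> K c nz.
(* K(-a, b) cancels and its denominator may vanish: keep it folded. *)
set K_mid := K (- a) b.
by rewrite /K mulrNN -opprD mulNr -/c /c; field.
Qed.

Section SoftBitSymmetry.
Variables (R : realFieldType) (Y : finType) (V : Y -> bool -> R).
Hypothesis V_ge0 : forall y x, 0 <= V y x.

(* The soft bit of an output o: the posterior mean of (-1)^u under a uniform
   prior, D = (V(o|0) - V(o|1)) / (V(o|0) + V(o|1)) = (1 - L) / (1 + L). *)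
Definition softbit s (o : outT Y s) : R :=
  (synth V o false - synth V o true) / (synth V o false + synth V o true).

(* The law of D under input 0 is symmetric: weighted by 1 - D it is invariant
   under D |-> -D (equivalently, L under input 1 is distributed as 1/L under
   input 0). *)
Definition sym_softbit s : Prop :=
  forall k : R -> R,
    Eout V s (fun o => (1 - softbit o) * (k (softbit o) - k (- softbit o))) = 0.

Lemma LV_softbit s (o : outT Y s) :
  LV_lt1 V o = (0 < softbit o) /\ LV_gt1 V o = (softbit o < 0).
Proof.
rewrite /LV_lt1 /LV_gt1 /softbit.
have x_ge0 := synth_ge0 o false V_ge0; have y_ge0 := synth_ge0 o true V_ge0.
have [/eqP sum0 | sum_gt0] := eqVneq (synth V o false + synth V o true) 0.
  move: sum0; rewrite paddr_eq0 // => /andP [/eqP -> /eqP ->].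
  by rewrite subrr mul0r ltxx.
have pos : 0 < (synth V o false + synth V o true)^-1.
  by rewrite invr_gt0 lt_def sum_gt0 addr_ge0.
by rewrite pmulr_lgt0 // pmulr_llt0 // subr_gt0 subr_lt0.
Qed.

(* The base channel: the symmetry pi maps D to -D and V(.|0) to V(.|1). *)
Lemma sym_softbit_nil (pi : Y -> Y) :
  involutive pi -> (forall y, V y true = V (pi y) false) -> sym_softbit [::].
Proof.
move=> piK Vsym k; rewrite Eout_nil; set D := @softbit [::].
have D_flip x : D (pi x) = - D x.
  by rewrite /D /softbit /= (Vsym (pi x)) piK -Vsym -opprB [V x true + _]addrC mulNr.
have reflect (phi : R -> R) :
  \sum_(x : Y) V x false * phi (- D x) = \sum_(x : Y) V x true * phi (D x).
  rewrite (reindex_inj (can_inj piK)); apply: eq_bigr => x _.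
  by rewrite D_flip opprK -Vsym.
transitivity (\sum_(x : Y) V x false * ((1 - D x) * k (D x))
            - \sum_(x : Y) V x false * ((1 + - D x) * k (- D x))).
  by rewrite -sumrB; apply: eq_bigr => x _; ring.
rewrite (reflect (fun d => (1 + d) * k d)) -sumrB big1 // => x _.
rewrite !mulrA -mulrBl (_ : V x false * (1 - D x) - V x true * (1 + D x) = 0) ?mul0r //.
rewrite /D /softbit /=.
have [/eqP sum0 | sum_ne0] := eqVneq (V x false + V x true) 0.
  by move: sum0; rewrite paddr_eq0 // => /andP [/eqP -> /eqP ->]; rewrite !mul0r subrr.
by field.
Qed.

Lemma Eout2_odd_parts s (k1 k2 : R -> R -> R) : sym_softbit s ->
  Eout V s (fun o1 => Eout V s (fun o2 =>
      (1 - softbit o1) * (k1 (softbit o2) (softbit o1) - k1 (softbit o2) (- softbit o1))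
    + (1 - softbit o2) * (k2 (softbit o1) (softbit o2) - k2 (softbit o1) (- softbit o2))))
  = 0.
Proof.
move=> symD; under Eout_ext do rewrite Eout_add (symD (k2 _)) addr0.
by rewrite Eout_swap; under Eout_ext do rewrite (symD (k1 _)); rewrite Eout0.
Qed.

Lemma softbit_minus s (o1 o2 : outT Y s) :
  softbit (build false o1 o2) = softbit o1 * softbit o2.
Proof.
rewrite /softbit /= !big_bool /=.
set x1 := synth V o1 false; set y1 := synth V o1 true.
set x2 := synth V o2 false; set y2 := synth V o2 true.
rewrite [X in X / _](_ : _ = 2^-1 * ((x1 - y1) * (x2 - y2))); last by field.
rewrite [X in _ / X](_ : _ = 2^-1 * ((x1 + y1) * (x2 + y2))); last by field.
by rewrite invfM invrK mulrACA mulVf ?pnatr_eq0 // mul1r invfM mulrACA.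
Qed.

Lemma softbit_plus s (o1 o2 : outT Y s) : supp V o1 -> supp V o2 ->
  1 + softbit o1 * softbit o2 != 0 /\
  softbit (build true o1 o2)
  = (softbit o1 + softbit o2) / (1 + softbit o1 * softbit o2).
Proof.
rewrite /supp /softbit /= => p1 p2.
have q1 := synth_ge0 o1 true V_ge0; have q2 := synth_ge0 o2 true V_ge0.
move: p1 p2 q1 q2.
set x1 := synth V o1 false; set y1 := synth V o1 true.
set x2 := synth V o2 false; set y2 := synth V o2 true => p1 p2 q1 q2.
have n1 : x1 + y1 != 0 by rewrite gt_eqF //; lra.
have n2 : x2 + y2 != 0 by rewrite gt_eqF //; lra.
have n12 : x1 * x2 + y1 * y2 != 0 by rewrite gt_eqF //; nra.
have one_plus : 1 + (x1 - y1) / (x1 + y1) * ((x2 - y2) / (x2 + y2))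
              = 2 * (x1 * x2 + y1 * y2) / ((x1 + y1) * (x2 + y2)) :> R.
  by field; rewrite n1 n2.
split; first by rewrite one_plus !mulf_neq0 ?pnatr_eq0 // invr_eq0 mulf_neq0.
by rewrite one_plus; field; rewrite n1 n2 n12.
Qed.

Lemma sym_softbit_minus s : sym_softbit s -> sym_softbit (false :: s).
Proof.
move=> symD k; rewrite Eout_cons.
rewrite -(Eout2_odd_parts (fun b u => k (u * b)) (fun a v => a * k (a * v)) symD).
by apply: Eout_ext => o1; apply: Eout_ext => o2; rewrite softbit_minus odd_parts_minus.
Qed.

Lemma sym_softbit_plus s : sym_softbit s -> sym_softbit (true :: s).
Proof.
move=> symD k; rewrite Eout_cons.
pose K u v := k ((u + v) / (1 + u * v)) / (1 + u * v).
rewrite -(Eout2_odd_parts (fun b u => (1 - b) * K u b) (fun a v => (1 - a) * K (- a) v) symD).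
apply: Eout_supp => // o1 p1; apply: Eout_supp => // o2 p2.
have [nz ->] := softbit_plus p1 p2.
exact: odd_parts_plus.
Qed.

Lemma sym_softbit_all (pi : Y -> Y) :
  involutive pi -> (forall y, V y true = V (pi y) false) -> forall s, sym_softbit s.
Proof.
move=> piK Vsym; elim=> [|[] s IH]; first exact: sym_softbit_nil piK Vsym.
  exact: sym_softbit_plus.
exact: sym_softbit_minus.
Qed.

(* Condition (A) from the symmetry: P[D > 0] - P[D < 0] = E[|D|] >= 0. *)
Lemma condA_of_sym s : sym_softbit s ->
  @ProbV R Y V s (@LV_gt1 R Y V s) <= @ProbV R Y V s (@LV_lt1 R Y V s).
Proof.
move=> symD; pose k (d : R) : R := ((0 < d)%R)%:R.
have -> : @ProbV R Y V s (@LV_gt1 R Y V s) = Eout V s (fun o => k (- softbit o)).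
  by rewrite ProbV_Eout; apply: Eout_ext => o; rewrite (LV_softbit o).2 /k oppr_gt0.
have -> : @ProbV R Y V s (@LV_lt1 R Y V s) = Eout V s (fun o => k (softbit o)).
  by rewrite ProbV_Eout; apply: Eout_ext => o; rewrite (LV_softbit o).1.
rewrite -subr_ge0 -Eout_sub.
have -> : Eout V s (fun o => k (softbit o) - k (- softbit o))
          = Eout V s (fun o => (1 - softbit o) * (k (softbit o) - k (- softbit o)))
          + Eout V s (fun o => softbit o * (k (softbit o) - k (- softbit o))).
  by rewrite -Eout_add; apply: Eout_ext => o; ring.
rewrite symD add0r; apply: Eout_ge0 => // o.
rewrite /k oppr_gt0; case: ltrgtP => [pos|neg|<-] /=; last by rewrite mul0r.
- by rewrite subr0 mulr1 ltW.
- by rewrite sub0r mulrN1 oppr_ge0 ltW.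
Qed.

End SoftBitSymmetry.

Lemma idx_minus n i : (0 < i)%N -> idx n.+1 (2 * i - 1) = false :: idx n i.
Proof.
move=> i_gt0; rewrite /idx /=.
have -> : (2 * i - 1 - 1 = 2 * (i - 1))%N by lia.
by rewrite mul2n odd_double doubleK.
Qed.

Lemma condA_all (R : realFieldType) (Y : finType) (V : Y -> bool -> R) (pi : Y -> Y) :
  involutive pi -> (forall y, V y true = V (pi y) false) -> (forall y x, 0 <= V y x) ->
  forall n i, condA V n i.
Proof.
move=> piK Vsym V_ge0 n i.
exact: (condA_of_sym V_ge0 (sym_softbit_all V_ge0 piK Vsym _)).
Qed.

Lemma polar_inheritance (R : realFieldType) (Y : finType) (W V : Y -> bool -> R) :
  bdmc W -> bdmc V -> sym_same W V ->
  forall n i : nat, (0 < i <= 2 ^ n)%N ->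
    condA V n i -> condB W V n i ->
    [/\ condA V n.+1 (2 * i - 1), condB W V n.+1 (2 * i - 1) & condA V n.+1 (2 * i)].
Proof.
move=> hW hV [pi [piK [Wsym Vsym]]] n i /andP [i_gt0 _] _ hB.
split; try exact: (condA_all piK Vsym hV.1).
by rewrite /condB idx_minus //; apply: (condB_minus piK Wsym Vsym).
Qed.

Section CounterExample.
Variable R : realFieldType.

Lemma big_I3 (F : 'I_3 -> R) :
  \sum_(y : 'I_3) F y = F (@Ordinal 3 0 isT) + F (@Ordinal 3 1 isT) + F (@Ordinal 3 2 isT).
Proof. by rewrite !big_ord_recl big_ord0 addr0 addrA; congr (F _ + F _ + F _); apply: val_inj. Qed.

Lemma ex_bdmc (C0 : 'I_3 -> R) : (forall y, 0 <= C0 y) -> \sum_(y : 'I_3) C0 y = 1 ->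
  bdmc (fun y (x : bool) => if x then C0 (rev_ord y) else C0 y).
Proof.
move=> C_ge0 C_sum1; split=> [y [] //|[] //].
by rewrite -C_sum1 [RHS](reindex_inj rev_ord_inj).
Qed.

Lemma ex_sym_same : sym_same (exW R) (exV R).
Proof. by exists (@rev_ord 3); split; [exact: rev_ordK | split]. Qed.

Lemma exW_bdmc : bdmc (exW R).
Proof.
apply: ex_bdmc => [y|]; last by rewrite big_I3 /exW0 /=; lra.
by rewrite /exW0; case: (val y) => [|[|k]]; rewrite ?divr_ge0 ?ler0n.
Qed.

Lemma exV_bdmc : bdmc (exV R).
Proof.
apply: ex_bdmc => [y|]; last by rewrite big_I3 /exV0 /=; lra.
by rewrite /exV0; case: (val y) => [|[|k]]; rewrite ?divr_ge0 ?ler0n.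
Qed.

Ltac hind_eval :=
  repeat match goal with |- context [Hind ?a ?b] =>
    first [ rewrite (@Hind_gt _ a b); last by lra
          | rewrite (@Hind_lt _ a b); last by lra
          | rewrite (@Hind_eq _ a b); last by lra ] end.

(* Pe_1(W,V) = 0.3 <= 0.35 = Pe_1(V). *)
Lemma ex_condB_1 : condB (exW R) (exV R) 0 1.
Proof.
have [pi [piK [Wsym Vsym]]] := ex_sym_same.
rewrite /condB (Pe_err piK Wsym Vsym) (Pe_err piK Vsym Vsym) /err /errV /=.
by rewrite !big_I3 /exW /exW0 /exV /exV0 /=; hind_eval; lra.
Qed.

Lemma ex_not_condB_2 : ~ condB (exW R) (exV R) 1 2.
Proof.
have [pi [piK [Wsym Vsym]]] := ex_sym_same.
rewrite /condB (Pe_err piK Wsym Vsym) (Pe_err piK Vsym Vsym) /err /errV.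
rewrite !big_out_plus /= !big_I3 !big_bool /exW /exW0 /exV /exV0 /=.
by hind_eval; lra.
Qed.

End CounterExample.

Theorem theorem3 :
  (forall (R : realFieldType) (Y : finType) (W V : Y -> bool -> R),
     bdmc W -> bdmc V -> sym_same W V ->
     forall n i : nat, (0 < i <= 2 ^ n)%N ->
       condA V n i -> condB W V n i ->
       [/\ condA V n.+1 (2 * i - 1), condB W V n.+1 (2 * i - 1)
         & condA V n.+1 (2 * i)])
  /\
  (forall R : realFieldType,
     [/\ bdmc (exW R), bdmc (exV R) & sym_same (exW R) (exV R)] /\
     [/\ condA (exV R) 0 1, condB (exW R) (exV R) 0 1
       & ~ condB (exW R) (exV R) 1 2]).
Proof.
split; first exact: polar_inheritance.
move=> R; have [pi [piK [_ Vsym]]] := ex_sym_same R.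
split; first by split; [exact: exW_bdmc | exact: exV_bdmc | exact: ex_sym_same].
split; [exact: (condA_all piK Vsym (exV_bdmc R).1) | exact: ex_condB_1 | exact: ex_not_condB_2].
Qed.
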